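(* If $T$ is a subcubic tree of order $n$ and dissociation number $\psi$, then $\Phi(T)\le 1.466^{4n-5\psi+2}$.
   Context: All graphs are finite, simple and undirected. A subcubic tree is a tree of maximum degree at most $3$. A dissociation set in a graph $G$ is a vertex subset $F$ such that the induced subgraph $G[F]$ has maximum degree at most $1$; a maximum dissociation set is one of maximum cardinality, and the dissociation number $\psi(G)$ is that cardinality. $\Phi(G)$ denotes the number of maximum dissociation sets of $G$. *)

From mathcomp Require Import all_boot all_order all_algebra.
Set Implicit Arguments. Unset Strict Implicit. Unset Printing Implicit Defensive.

Definition simple_graph (T : finType) (e : rel T) : Prop :=
  symmetric e /\ irreflexive e.

Definition nedges (T : finType) (e : rel T) : nat :=
  #|[set p : T * T | e p.1 p.2]| %/ 2.

Definition is_tree (T : finType) (e : rel T) : Prop :=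
  simple_graph e /\ 0 < #|T| /\ (forall x y, connect e x y) /\
  nedges e = #|T| - 1.

Definition degree (T : finType) (e : rel T) (v : T) : nat := #|[set u | e v u]|.

Definition subcubic (T : finType) (e : rel T) : Prop :=
  forall v, degree e v <= 3.

Definition dissociation (T : finType) (e : rel T) (F : {set T}) : bool :=
  [forall v in F, #|[set u in F | e v u]| <= 1].

Definition psi (T : finType) (e : rel T) : nat :=
  \max_(F : {set T} | dissociation e F) #|F|.

Definition Phi (T : finType) (e : rel T) : nat :=
  #|[set F : {set T} | dissociation e F & #|F| == psi e]|.

(* Measure and conquer.  For a vertex set S of a subcubic forest let
   mu(S) = 6|S| - (sum of the degrees in G[S]) - 5 psi(S).  A tree on n vertices has
   n - 1 edges, so mu = 4n - 5 psi + 2 and it suffices to prove Phi(S) <= c^mu(S) for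
   c = 1.466, by induction on |S|.
   Branching on a vertex list Q: if some dissociation set P inside Q has all its
   S-neighbours in Q, then every maximum dissociation set F meets Q in at least |P|
   vertices, and F |-> F \ Q maps the maximum sets with a fixed trace F /\ Q injectively
   to dissociation sets of S \ Q of size psi(S) - |F /\ Q|.  Since G[Q] is a forest it
   spans at most |Q| - 1 edges, so deleting Q lowers mu by at least
   4|Q| + 2 - 2(edges leaving Q) - 5|F /\ Q|.
   Peeling the leaves twice shows that G[S] has an isolated vertex or edge, a P3
   component, a vertex with two pendant leaves, or one of three pendant configurations
   around a vertex of degree 2 or 3.  For each of them a short list of traces covers all
   maximum sets, and the resulting sum of powers of c is at most c^mu(S) because
   c^3 >= c^2 + 1 (c lies just above the real root of x^3 = x^2 + 1). *)

From mathcomp Require Import all_boot all_order all_algebra.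
From mathcomp Require Import zify ring lra.
Import Order.TTheory GRing.Theory Num.Theory.
Set Implicit Arguments. Unset Strict Implicit. Unset Printing Implicit Defensive.

Section SupergoldenConstant.
Local Open Scope ring_scope.

(* Locked: unification would otherwise unfold the rational literal and stall. *)
Definition c : rat := locked (1466%:Q / 1000%:Q).
Definition cpow (z : int) : rat := c ^ z.

Lemma c_gt1 : 1 < c. Proof. rewrite /c -lock; lra. Qed.

Lemma c_cube : c ^+ 2 + 1 <= c ^+ 3. Proof. rewrite /c -lock; lra. Qed.

Lemma c_quartic : c ^+ 3 + c <= c ^+ 4.
Proof.
have c0 : 0 <= c by apply: ltW; apply: lt_trans c_gt1.
by have := ler_wpM2l c0 c_cube; rewrite mulrDr mulr1 -!exprS.
Qed.

Lemma cpow_gt0 z : 0 < cpow z.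
Proof. by apply: exprz_gt0; apply: lt_trans c_gt1. Qed.

Lemma cpow_le z1 z2 : z1 <= z2 -> cpow z1 <= cpow z2.
Proof. by move=> z12; apply: ler_weXz2l => //; apply: ltW c_gt1. Qed.

Lemma cpowD z (k : nat) : cpow (z + k%:Z) = cpow z * c ^+ k.
Proof. by rewrite /cpow expfzDr // gt_eqF // (lt_trans _ c_gt1). Qed.

Lemma cpow_sum2 m a1 a2 : a1 <= m - 1 -> a2 <= m - 3 ->
  cpow a1 + cpow a2 <= cpow m.
Proof.
move=> h1 h2; have -> : m = m - 4 + 4%:Z by ring.
apply: le_trans (_ : cpow (m - 4 + 3%:Z) + cpow (m - 4 + 1%:Z) <= _).
  by apply: lerD; apply: cpow_le; lia.
by rewrite !cpowD -mulrDr ler_pM2l ?cpow_gt0 // expr1 c_quartic.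
Qed.

Lemma cpow_sum3 m a1 a2 a3 : a1 <= m - 2 -> a2 <= m - 3 -> a3 <= m - 4 ->
  cpow a1 + cpow a2 + cpow a3 <= cpow m.
Proof.
move=> h1 h2 h3; have -> : m = m - 4 + 4%:Z by ring.
apply: le_trans
  (_ : cpow (m - 4 + 2%:Z) + cpow (m - 4 + 1%:Z) + cpow (m - 4 + 0%:Z) <= _).
  by do 2?apply: lerD; apply: cpow_le; lia.
rewrite !cpowD -!mulrDr ler_pM2l ?cpow_gt0 // expr1 expr0.
by apply: le_trans c_quartic; rewrite addrAC lerD2r c_cube.
Qed.

End SupergoldenConstant.

Section SmallSets.
Variable X : finType.
Implicit Types (A : {set X}) (a b : X).

Lemma card1_set1 A a : #|A| = 1 -> a \in A -> A = [set a].
Proof. by move=> /eqP/cards1P[x ->]; rewrite inE => /eqP ->. Qed.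

Lemma card2_set2 A a b : #|A| = 2 -> a \in A -> b \in A -> a != b -> A = [set a; b].
Proof.
move=> cA aA bA ab; apply/eqP; rewrite eq_sym eqEcard cards2 ab cA leqnn andbT.
by apply/subsetP => u; rewrite !inE => /orP[] /eqP ->.
Qed.

Lemma card3_set3 A a b : #|A| = 3 -> a \in A -> b \in A -> a != b ->
  exists c, [/\ A = [set a; b; c], a != c & b != c].
Proof.
move=> cA aA bA ab; have sub : [set a; b] \subset A.
  by apply/subsetP => u; rewrite !inE => /orP[] /eqP ->.
have /cards1P[c hc] : #|A :\: [set a; b]| == 1.
  by have := cardsID [set a; b] A; rewrite (setIidPr sub) cards2 ab cA; lia.
have : c \in A :\: [set a; b] by rewrite hc set11.
rewrite !inE negb_or => /andP[/andP[ca cb] cA'].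
have [ac bc] : a != c /\ b != c by rewrite ![_ == c]eq_sym.
exists c; split => //; apply/eqP; rewrite eq_sym eqEcard cA.
rewrite -setUA cardsU1 cards2 bc !inE negb_or ab ac /= leqnn andbT.
by apply/subsetP => u; rewrite !inE => /or3P[]/eqP->.
Qed.

Lemma card_gt1_other A a : 1 < #|A| -> exists2 b, b \in A & b != a.
Proof.
move=> A1; have /card_gt0P[b] : 0 < #|A :\ a| by have := cardsD1 a A; case: (a \in A) => /=; lia.
by rewrite !inE => /andP[ba bA]; exists b.
Qed.

End SmallSets.

Section SubcubicForests.
Variables (T : finType) (e : rel T).
Implicit Types (S A B C F G P : {set T}) (Q ps : seq T).

Definition nbhd (S : {set T}) (v : T) : {set T} := [set u in S | e v u].
Definition deg_in (S : {set T}) (v : T) : nat := #|nbhd S v|.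
Definition degsum (S : {set T}) : nat := \sum_(v in S) deg_in S v.

Definition dissociation_in (S F : {set T}) : bool := (F \subset S) && dissociation e F.
Definition psi_in (S : {set T}) : nat :=
  \max_(F : {set T} | dissociation_in S F) #|F|.
Definition ndiss_in (S : {set T}) (k : nat) : nat :=
  #|[set F : {set T} | dissociation_in S F & #|F| == k]|.
Definition Phi_in (S : {set T}) : nat := ndiss_in S (psi_in S).

Lemma psi_in_setT : psi_in setT = psi e.
Proof. by apply: eq_bigl => F; rewrite /dissociation_in subsetT. Qed.

Lemma Phi_in_setT : Phi_in setT = Phi e.
Proof.
rewrite /Phi_in /ndiss_in psi_in_setT; apply: eq_card => F.
by rewrite !inE /dissociation_in subsetT.
Qed.

Lemma nbhdE S v N u : nbhd S v = N -> (u \in N) = (u \in S) && e v u.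
Proof. by move=> <-; rewrite inE. Qed.

Lemma nbhd_sub S v : nbhd S v \subset S.
Proof. by apply/subsetP => u; rewrite inE => /andP[]. Qed.

Lemma deg_in_setD S A v : deg_in S v = deg_in (S :\: A) v + deg_in (S :&: A) v.
Proof.
rewrite /deg_in -(cardsID A (nbhd S v)) addnC; congr (_ + _); apply: eq_card => u;
  by rewrite !inE; case: (u \in A) (u \in S) (e v u) => [] [] [].
Qed.

Lemma dissociationP F :
  reflect (forall v, v \in F -> #|nbhd F v| <= 1) (dissociation e F).
Proof. exact: (iffP forall_inP). Qed.

Lemma dissociationS F G : F \subset G -> dissociation e G -> dissociation e F.
Proof.
move=> sFG /dissociationP dG; apply/dissociationP => v vF.
apply: leq_trans (dG v (subsetP sFG v vF)); apply: subset_leq_card.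
by apply/subsetP => u; rewrite !inE => /andP[/(subsetP sFG) -> ->].
Qed.

Lemma dissociation_no_P3 F x a b : dissociation e F -> e x a -> e x b -> a != b ->
  ~~ [&& x \in F, a \in F & b \in F].
Proof.
move=> /dissociationP dF xa xb ab; apply/and3P => -[xF aF bF].
have : [set a; b] \subset nbhd F x.
  by apply/subsetP => u; rewrite !inE => /orP[] /eqP ->; rewrite ?aF ?bF ?xa ?xb.
by move/subset_leq_card; rewrite cards2 ab => /leq_trans/(_ (dF x xF)).
Qed.

Lemma psi_in_max S F : dissociation_in S F -> #|F| <= psi_in S.
Proof. exact: leq_bigmax_cond. Qed.

Lemma psi_in_attained S : exists2 F, dissociation_in S F & #|F| = psi_in S.
Proof.
have hc : 0 < #|[pred F : {set T} | dissociation_in S F]|.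
  apply/card_gt0P; exists set0.
  by rewrite !inE /dissociation_in sub0set; apply/dissociationP => v; rewrite inE.
have [F hF eF] := @eq_bigmax_cond _ (dissociation_in S) (fun F => #|F|) hc.
by exists F; rewrite // /psi_in eF.
Qed.

Lemma ndiss_in_gt_psi S k : psi_in S < k -> ndiss_in S k = 0.
Proof.
move=> lt; apply/eqP; rewrite cards_eq0; apply/eqP/setP => F; rewrite !inE.
apply/negbTE/andP => -[/psi_in_max le /eqP sF].
by move: lt; rewrite -sF ltnNge le.
Qed.

Lemma psi_in_set0 : psi_in set0 = 0.
Proof.
have [F /andP[F0 _] <-] := psi_in_attained set0.
by move: F0; rewrite subset0 => /eqP ->; rewrite cards0.
Qed.

Lemma Phi_in_set0 : Phi_in set0 <= 1.
Proof.
rewrite -(cards1 (set0 : {set T})); apply: subset_leq_card; apply/subsetP => F.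
by rewrite !inE => /andP[/andP[]]; rewrite subset0.
Qed.

Hypotheses (e_sym : symmetric e) (e_irr : irreflexive e).

Lemma dissociationU F G : dissociation e F -> dissociation e G ->
  (forall a b, a \in G -> b \in F -> ~~ e a b) -> dissociation e (F :|: G).
Proof.
move=> /dissociationP dF /dissociationP dG noFG.
apply/dissociationP => v; rewrite inE => /orP[vF|vG].
  apply: leq_trans (dF v vF); apply: subset_leq_card; apply/subsetP => u.
  rewrite !inE => /andP[/orP[-> -> //|uG vu]].
  by move: (noFG u v uG vF); rewrite e_sym vu.
apply: leq_trans (dG v vG); apply: subset_leq_card; apply/subsetP => u.
rewrite !inE => /andP[/orP[uF vu|-> -> //]].
by move: (noFG v u vG uF); rewrite vu.
Qed.

Lemma dissociation_pair a b : dissociation e [set:: [:: a; b]].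
Proof.
apply/dissociationP => v vF; set F := [set:: _] in vF *.
have cF : #|F| <= 2 by rewrite cardsE (card_size [:: a; b]).
have : #|F :\ v| <= 1 by move: cF; rewrite (cardsD1 v) vF.
apply: leq_trans; apply: subset_leq_card; apply/subsetP => u.
by rewrite !inE => /andP[-> vu]; rewrite andbT; apply: contraTneq vu => ->; rewrite e_irr.
Qed.

Lemma dissociation_set1 a : dissociation e [set:: [:: a]].
Proof.
by apply: dissociationS (dissociation_pair a a); apply/subsetP => u; rewrite !inE => ->.
Qed.

Lemma psi_in_setD_dissociation S A P : P \subset A -> A \subset S ->
  dissociation e P -> (forall a, a \in P -> nbhd S a \subset A) ->
  psi_in (S :\: A) + #|P| <= psi_in S.
Proof.
move=> PA AS dP nP.
have [D /andP[DSA dD] <-] := psi_in_attained (S :\: A).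
have DP0 : [disjoint D & P].
  apply/pred0P => y /=; apply/negbTE/andP => -[/(subsetP DSA)].
  by rewrite inE => /andP[/negP yA _] /(subsetP PA).
rewrite -cardsUI (disjoint_setI0 DP0) cards0 addn0; apply: psi_in_max.
rewrite /dissociation_in subUset (subset_trans DSA (subsetDl S A)) (subset_trans PA AS).
apply: dissociationU => // a b aP bD; have bSA := subsetP DSA b bD.
have bS := subsetP (subsetDl S A) b bSA; apply: contraTN bSA => ab.
by rewrite inE (subsetP (nP a aP)) // inE bS ab.
Qed.

Lemma max_dissociation_meets S A F k : dissociation_in S F -> #|F| = psi_in S ->
  psi_in (S :\: A) + k <= psi_in S -> k <= #|F :&: A|.
Proof.
move=> /andP[FS dF] sF hk.
have : #|F :\: A| <= psi_in (S :\: A).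
  by apply: psi_in_max; rewrite /dissociation_in setSD //= (dissociationS (subsetDl F A)).
by have := cardsID A F; lia.
Qed.

Definition shielded S (Q ps : seq T) : Prop :=
  [/\ uniq ps, {subset ps <= Q}, dissociation e [set:: ps] &
      {in ps, forall a, nbhd S a \subset [set:: Q]}].

Lemma card_setI_seq F (Q : seq T) : uniq Q -> #|F :&: [set:: Q]| = count (mem F) Q.
Proof.
move=> uQ; have -> : F :&: [set:: Q] = [set:: [seq y <- Q | y \in F]].
  by apply/setP => y; rewrite !inE mem_filter.
by rewrite cardsE (card_uniqP (filter_uniq _ uQ)) size_filter.
Qed.

Lemma psi_in_setD_shielded S Q ps : {subset Q <= S} -> shielded S Q ps ->
  psi_in (S :\: [set:: Q]) + size ps <= psi_in S.
Proof.
move=> QS [ups psQ dps nps]; rewrite -(card_uniqP ups) -cardsE.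
apply: psi_in_setD_dissociation => //.
- by apply/subsetP => y; rewrite !inE => /psQ.
- by apply/subsetP => y; rewrite inE => /QS.
by move=> a; rewrite inE => /nps.
Qed.

Lemma count_max_shielded S Q ps F : uniq Q -> {subset Q <= S} -> shielded S Q ps ->
  dissociation_in S F -> #|F| = psi_in S -> size ps <= count (mem F) Q.
Proof.
move=> uQ QS sh dF sF; rewrite -card_setI_seq //.
exact: max_dissociation_meets dF sF (psi_in_setD_shielded QS sh).
Qed.

Definition matches F (Q : seq T) (bs : seq bool) : bool := [seq y \in F | y <- Q] == bs.

Lemma ndiss_in_matching S Q bs : uniq Q ->
  #|[set F | [&& dissociation_in S F, #|F| == psi_in S & matches F Q bs]]|
    <= ndiss_in (S :\: [set:: Q]) (psi_in S - count id bs).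
Proof.
move=> uQ; set C := [set F | _].
have inj : {in C &, injective (fun F => F :\: [set:: Q])}.
  move=> F1 F2; rewrite /C !inE => /and3P[_ _ /eqP m1] /and3P[_ _ /eqP m2] /setP F12.
  apply/setP => y; case yQ: (y \in Q); last by have := F12 y; rewrite !inE yQ.
  have := congr1 (nth false^~ (index y Q)) (etrans m1 (esym m2)).
  by rewrite !(nth_map y) ?index_mem // nth_index.
rewrite -(card_in_imset inj); apply: subset_leq_card; apply/subsetP => D.
case/imsetP => F; rewrite /C inE => /and3P[/andP[FS dF] /eqP sF /eqP mF] ->.
rewrite inE /dissociation_in setSD //= (dissociationS (subsetDl _ _) dF) /=.
have := cardsID [set:: Q] F; rewrite card_setI_seq // -mF count_map -sF.
by move=> <-; rewrite addKn.
Qed.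

Lemma card_bigcup_seq_le (X : finType) (I : Type) (L : seq I) (C : I -> {set X}) :
  #|\bigcup_(i <- L) C i| <= \sum_(i <- L) #|C i|.
Proof.
elim: L => [|i L IH]; first by rewrite !big_nil cards0.
by rewrite !big_cons (leq_trans (leq_card_setU _ _)) ?leq_add2l.
Qed.

Lemma Phi_in_le_sum_ndiss_in S (L : seq (seq T * seq bool)) :
  (forall qb, qb \in L -> uniq qb.1) ->
  (forall F, dissociation_in S F -> #|F| = psi_in S ->
     has (fun qb => matches F qb.1 qb.2) L) ->
  Phi_in S <= \sum_(qb <- L) ndiss_in (S :\: [set:: qb.1]) (psi_in S - count id qb.2).
Proof.
move=> uL cover.
pose C qb := [set F | [&& dissociation_in S F, #|F| == psi_in S & matches F qb.1 qb.2]].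
apply: (@leq_trans (\sum_(qb <- L) #|C qb|)); last first.
  rewrite big_seq_cond [X in _ <= X]big_seq_cond; apply: leq_sum => qb.
  by rewrite andbT => /uL; apply: ndiss_in_matching.
apply: (leq_trans _ (card_bigcup_seq_le L C)); apply: subset_leq_card.
apply/subsetP => F; rewrite inE => /andP[dF /eqP sF].
have /hasP[qb qbL mF] := cover F dF sF.
by rewrite (big_rem qb) //= inE; apply/orP; left; rewrite inE dF sF eqxx.
Qed.

Lemma nbhd_subset A B v : A \subset B -> nbhd A v \subset nbhd B v.
Proof. by move=> AB; apply/subsetP => u; rewrite !inE => /andP[/(subsetP AB) -> ->]. Qed.

Lemma deg_in_subset A B v : A \subset B -> deg_in A v <= deg_in B v.
Proof. by move/(nbhd_subset v)/subset_leq_card. Qed.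

Lemma sum_deg_in_sym A B : \sum_(v in A) deg_in B v = \sum_(v in B) deg_in A v.
Proof.
have degE C v : deg_in C v = \sum_(u in C) e v u.
  rewrite /deg_in -sum1_card big_mkcond [RHS]big_mkcond; apply: eq_bigr => u _.
  by rewrite inE; case: (u \in C); case: (e v u).
under eq_bigr do rewrite degE; under [RHS]eq_bigr do rewrite degE.
by rewrite exchange_big; apply: eq_bigr => u _; apply: eq_bigr => v _; rewrite e_sym.
Qed.

Lemma degsum_setD S A : A \subset S ->
  degsum S = degsum (S :\: A) + degsum A + 2 * \sum_(y in A) deg_in (S :\: A) y.
Proof.
move=> AS; have SA : S :&: A = A by apply/setIidPr.
have splitE B : \sum_(v in B) deg_in S v =
    \sum_(v in B) deg_in (S :\: A) v + \sum_(v in B) deg_in A v.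
  by rewrite -big_split; apply: eq_bigr => v _; rewrite (deg_in_setD S A) SA.
rewrite /degsum (big_setID A) /= SA !splitE (sum_deg_in_sym (S :\: A) A); lia.
Qed.

Hypothesis e_subcubic : subcubic e.
Hypothesis e_forest : forall A, A != set0 -> exists2 v, v \in A & deg_in A v <= 1.

Lemma deg_in_le3 S v : deg_in S v <= 3.
Proof.
apply: leq_trans (e_subcubic v); apply: subset_leq_card.
by apply/subsetP => u; rewrite !inE => /andP[].
Qed.

Lemma degsum_set1 v : degsum [set v] = 0.
Proof.
rewrite /degsum big_set1 /deg_in; apply/eqP; rewrite cards_eq0; apply/eqP/setP => u.
by rewrite !inE; case: eqP => // ->; rewrite e_irr.
Qed.

Lemma degsum_forest A : A != set0 -> degsum A + 2 <= 2 * #|A|.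
Proof.
have [n] := ubnP #|A|; elim: n A => // n IH A cA An.
have [v vA dv] := e_forest An; have vsubA : [set v] \subset A by rewrite sub1set.
have := degsum_setD vsubA; rewrite degsum_set1 big_set1.
have dv' : deg_in (A :\ v) v <= 1 by apply: leq_trans dv; apply/deg_in_subset/subsetDl.
have cA' : #|A| = #|A :\ v|.+1 by rewrite (cardsD1 v A) vA.
have [A0|A'n] := eqVneq (A :\ v) set0.
  have := subset_leq_card (nbhd_sub set0 v).
  by rewrite A0 {2}/degsum big_set0 cA' A0 cards0 /deg_in; lia.
have ltA' : #|A :\ v| < n by rewrite -ltnS -cA'.
by have := IH _ ltA' A'n; lia.
Qed.

Definition potential S : int := (6 * #|S|)%:Z - (degsum S)%:Z - (5 * psi_in S)%:Z.

Definition boundary S Q : nat := \sum_(y <- Q) deg_in (S :\: [set:: Q]) y.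

Lemma potential_setD S Q j : uniq Q -> Q != [::] -> {subset Q <= S} ->
  j <= psi_in S -> psi_in (S :\: [set:: Q]) = psi_in S - j ->
  (potential (S :\: [set:: Q]) <=
     potential S - (4 * size Q + 2)%:Z + (2 * boundary S Q + 5 * j)%:Z)%R.
Proof.
move=> uQ Qn QS jS hpsi.
have An : [set:: Q] != set0.
  by case: Q Qn {uQ QS hpsi} => // y Q _; apply/set0Pn; exists y; rewrite inE mem_head.
set A := [set:: Q] in An *.
have AS : A \subset S by apply/subsetP => y; rewrite inE => /QS.
have cA : #|A| = size Q by rewrite cardsE (card_uniqP uQ).
have hD := degsum_setD AS; have hF := degsum_forest An.
have hC := cardsID A S; rewrite (setIidPr AS) in hC.
have hB : \sum_(y in A) deg_in (S :\: A) y = boundary S Q.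
  by rewrite /boundary (big_uniq _ uQ); apply: eq_bigl => y; rewrite inE.
rewrite /potential hpsi; lia.
Qed.

Definition Phi_in_bounded S : Prop := ((Phi_in S)%:R <= cpow (potential S))%R.

Definition valid_branch S Q (bs : seq bool) : Prop :=
  [/\ uniq Q, Q != [::], {subset Q <= S} &
      psi_in (S :\: [set:: Q]) + count id bs <= psi_in S].

Definition branch_exponent S (qb : seq T * seq bool) : int :=
  potential S - (4 * size qb.1 + 2)%:Z + (2 * boundary S qb.1 + 5 * count id qb.2)%:Z.

Lemma ndiss_in_branch_le_cpow S Q bs :
  (forall S', #|S'| < #|S| -> Phi_in_bounded S') -> valid_branch S Q bs ->
  ((ndiss_in (S :\: [set:: Q]) (psi_in S - count id bs))%:R
     <= cpow (branch_exponent S (Q, bs)))%R.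
Proof.
move=> IH [uQ Qn QS hpsi].
have Q0 : 0 < #|[set:: Q]|.
  by case: Q Qn {uQ QS hpsi} => // y Q _; apply/card_gt0P; exists y; rewrite inE mem_head.
have ltS : #|S :\: [set:: Q]| < #|S|.
  rewrite -(cardsID [set:: Q] S) (setIidPr _); first by move: Q0; lia.
  by apply/subsetP => y; rewrite inE => /QS.
set S' := S :\: [set:: Q] in hpsi ltS *.
have [psi_lt|psi_ge] := ltnP (psi_in S') (psi_in S - count id bs).
  by rewrite ndiss_in_gt_psi // ltW ?cpow_gt0.
have psiE : psi_in S' = psi_in S - count id bs by lia.
have := IH S' ltS; rewrite /Phi_in_bounded /Phi_in -psiE => /le_trans; apply.
apply: cpow_le.
by apply: potential_setD => //=; lia.
Qed.

Lemma Phi_in_le_sum_cpow S (L : seq (seq T * seq bool)) :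
  (forall S', #|S'| < #|S| -> Phi_in_bounded S') ->
  (forall qb, qb \in L -> valid_branch S qb.1 qb.2) ->
  (forall F, dissociation_in S F -> #|F| = psi_in S ->
     has (fun qb => matches F qb.1 qb.2) L) ->
  ((Phi_in S)%:R <= \sum_(qb <- L) cpow (branch_exponent S qb))%R.
Proof.
move=> IH valid cover.
have := Phi_in_le_sum_ndiss_in (fun qb qbL => let: And4 uQ _ _ _ := valid qb qbL in uQ) cover.
rewrite -(ler_nat rat) natr_sum => /le_trans; apply.
rewrite big_seq_cond [X in (_ <= X)%R]big_seq_cond; apply: ler_sum => -[Q bs].
by rewrite andbT => /valid; apply: ndiss_in_branch_le_cpow.
Qed.

Lemma valid_branch_shielded S Q ps bs : uniq Q -> Q != [::] -> {subset Q <= S} ->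
  shielded S Q ps -> count id bs = size ps -> valid_branch S Q bs.
Proof. by move=> uQ Qn QS sh cbs; split; rewrite ?cbs ?psi_in_setD_shielded. Qed.

Lemma nbhd_eq_mem S v N u : nbhd S v = N -> u \in N -> u \in S /\ e v u.
Proof. by move=> hv; rewrite (nbhdE _ hv) => /andP. Qed.

Lemma adj_neq u v : e u v -> u != v.
Proof. by apply: contraTneq => ->; rewrite e_irr. Qed.

Lemma deg_in_setD_le S A B y : nbhd S y \subset B :|: A -> deg_in (S :\: A) y <= #|B|.
Proof.
move=> sub; apply/subset_leq_card/subsetP => u; rewrite !inE => /andP[/andP[uA uS] yu].
by have := subsetP sub u; rewrite !inE uS yu (negbTE uA) orbF; apply.
Qed.

Lemma deg_in_setD0 S A y : nbhd S y \subset A -> deg_in (S :\: A) y = 0.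
Proof.
by move=> sub; apply/eqP; rewrite -leqn0 -(cards0 T); apply: deg_in_setD_le; rewrite set0U.
Qed.

Lemma deg_in_setD1 S A y p : nbhd S y \subset p |: A -> deg_in (S :\: A) y <= 1.
Proof. by move/deg_in_setD_le; rewrite cards1. Qed.

Lemma deg_in_setD_le2 S A y u : u \in A -> u \in S -> e y u -> deg_in (S :\: A) y <= 2.
Proof.
move=> uA uS yu; have := deg_in_setD S A y; have := deg_in_le3 S y.
have : 0 < deg_in (S :&: A) y by apply/card_gt0P; exists u; rewrite !inE uS uA yu.
lia.
Qed.

Lemma neq_nbhd S a b N M u : nbhd S a = N -> nbhd S b = M -> u \in N -> u \notin M ->
  a != b.
Proof. by move=> ha hb uN; apply: contraNneq => ab; rewrite -hb -ab ha. Qed.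

Lemma nbhd_eq_nadj S a N b : nbhd S a = N -> b \in S -> b \notin N -> ~~ e a b.
Proof. by move=> ha bS; apply: contra => ab; rewrite (nbhdE _ ha) bS. Qed.

Lemma dissociation_cat ps1 ps2 :
  dissociation e [set:: ps1] -> dissociation e [set:: ps2] ->
  {in ps2 & ps1, forall a b, ~~ e a b} -> dissociation e [set:: ps1 ++ ps2].
Proof.
move=> d1 d2 no12; have -> : [set:: ps1 ++ ps2] = [set:: ps1] :|: [set:: ps2].
  by apply/setP => y; rewrite !inE mem_cat.
by apply: dissociationU => // a b; rewrite !inE; apply: no12.
Qed.

Lemma branch_exponent_le S Q bs b r : boundary S Q <= b ->
  2 * b + 5 * count id bs + r <= 4 * size Q + 2 ->
  (branch_exponent S (Q, bs) <= potential S - r%:Z)%R.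
Proof. by rewrite /branch_exponent /=; lia. Qed.

Definition leaves S : {set T} := [set v in S | deg_in S v <= 1].

Lemma leaf_nbhd S v y : v \in leaves S -> y \in S -> e v y -> nbhd S v = [set y].
Proof.
rewrite inE => /andP[_ d1] yS vy; apply: card1_set1; last by rewrite inE yS vy.
have : 0 < #|nbhd S v| by apply/card_gt0P; exists y; rewrite inE yS vy.
by move: d1; rewrite /deg_in; lia.
Qed.

Lemma nonleaf_deg S v : v \in S :\: leaves S -> 2 <= deg_in S v.
Proof. by rewrite !inE => /andP[]; case: (v \in S) => //=; rewrite -ltnNge. Qed.

Lemma nbhd_restrict S B w : B \subset S -> nbhd S w \subset B -> nbhd B w = nbhd S w.
Proof.
move=> BS wB; apply/eqP; rewrite eqEsubset (nbhd_subset w BS) /=.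
by apply/subsetP => u uN; rewrite inE (subsetP wB u uN); move: uN; rewrite inE => /andP[].
Qed.

Lemma leaves_proper S : S != set0 -> {in S, forall v, 0 < deg_in S v} ->
  {in leaves S &, forall u v, ~~ e u v} -> S :\: leaves S != set0.
Proof.
move=> /set0Pn[v vS] pos noLL; apply/set0Pn.
have [vL|] := boolP (v \in leaves S); last by exists v; rewrite inE vS andbT.
have /card_gt0P[u] := pos v vS; rewrite inE => /andP[uS vu].
exists u; rewrite inE uS andbT; apply: contraTN vu => uL.
by apply: noLL.
Qed.

Ltac distinct := rewrite /= ?inE ?negb_or; repeat (apply/andP; split); by [|rewrite eq_sym].

Section Reductions.
Variable S : {set T}.
Hypothesis S_IH : forall S', #|S'| < #|S| -> Phi_in_bounded S'.

Lemma Phi_in_bounded_isolated_vertex v : v \in S -> nbhd S v = set0 -> Phi_in_bounded S.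
Proof.
move=> vS hv; have sh : shielded S [:: v] [:: v].
  by split=> //; [exact: dissociation_set1 | apply/allP; rewrite /= hv sub0set].
have vQ : {subset [:: v] <= S} by apply/allP; rewrite /= vS.
apply: le_trans (Phi_in_le_sum_cpow (L := [:: ([:: v], [:: true])]) S_IH _ _) _.
- by move=> qb; rewrite inE => /eqP->; apply: valid_branch_shielded sh _.
- move=> F dF sF; have := count_max_shielded (isT : uniq [:: v]) vQ sh dF sF.
  by rewrite /matches /=; case: (v \in F).
have v0 : deg_in (S :\: [set:: [:: v]]) v = 0 by apply: deg_in_setD0; rewrite hv sub0set.
rewrite big_cons big_nil addr0; apply: cpow_le; rewrite -[X in (_ <= X)%R]subr0.
by apply: (branch_exponent_le (b := 0)); rewrite // /boundary big_cons big_nil v0.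
Qed.

Lemma Phi_in_bounded_isolated_edge u v :
  nbhd S u = [set v] -> nbhd S v = [set u] -> Phi_in_bounded S.
Proof.
move=> hu hv; have [[vS uv] [uS _]] := (nbhd_eq_mem hu (set11 v), nbhd_eq_mem hv (set11 u)).
set Q := [:: u; v]; have uQ : uniq Q by rewrite /= inE adj_neq.
have QS : {subset Q <= S} by apply/allP; rewrite /= uS vS.
have sh : shielded S Q Q.
  split=> //; first exact: dissociation_pair.
  by apply/allP; rewrite /= hu hv !sub1set !inE !eqxx ?orbT.
apply: le_trans (Phi_in_le_sum_cpow (L := [:: (Q, [:: true; true])]) S_IH _ _) _.
- by move=> qb; rewrite inE => /eqP->; apply: valid_branch_shielded sh _.
- move=> F dF sF; have := count_max_shielded uQ QS sh dF sF.
  by rewrite /matches /=; case: (u \in F); case: (v \in F).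
have [u0 v0] : deg_in (S :\: [set:: Q]) u = 0 /\ deg_in (S :\: [set:: Q]) v = 0.
  by split; apply: deg_in_setD0; rewrite ?hu ?hv sub1set !inE eqxx ?orbT.
rewrite big_cons big_nil addr0; apply: cpow_le; rewrite -[X in (_ <= X)%R]subr0.
by apply: (branch_exponent_le (b := 0)); rewrite // /boundary !big_cons big_nil u0 v0.
Qed.

Lemma Phi_in_bounded_P3 x v v' :
  nbhd S v = [set x] -> nbhd S v' = [set x] -> nbhd S x = [set v; v'] -> v != v' ->
  Phi_in_bounded S.
Proof.
move=> hv hv' hx vv'.
have [[vS xv] [v'S xv']] := (nbhd_eq_mem hx (set21 v v'), nbhd_eq_mem hx (set22 v v')).
have [xS _] := nbhd_eq_mem hv (set11 x).
have [xv0 xv'0] := (adj_neq xv, adj_neq xv').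
set Q := [:: x; v; v']; have uQ : uniq Q by distinct.
have QS : {subset Q <= S} by apply/allP; rewrite /= xS vS v'S.
have sh : shielded S Q [:: v; v'].
  split; [by distinct | by apply/allP; rewrite /= !inE !eqxx ?orbT |
          exact: dissociation_pair | by apply/allP; rewrite /= hv hv' !sub1set !inE eqxx].
apply: le_trans (Phi_in_le_sum_cpow (L := [:: (Q, [:: false; true; true]);
  (Q, [:: true; true; false]); (Q, [:: true; false; true])]) S_IH _ _) _.
- by move=> qb; rewrite !inE => /or3P[]/eqP->; apply: valid_branch_shielded sh _.
- move=> F dF sF; have := count_max_shielded uQ QS sh dF sF.
  case/andP: dF => _ dF; have := dissociation_no_P3 dF xv xv' vv'.
  by rewrite /matches /=; case: (x \in F); case: (v \in F); case: (v' \in F).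
have [x0 v0 v'0] : [/\ deg_in (S :\: [set:: Q]) x = 0, deg_in (S :\: [set:: Q]) v = 0
    & deg_in (S :\: [set:: Q]) v' = 0].
  by split; apply: deg_in_setD0; rewrite ?hx ?hv ?hv' ?subUset !sub1set !inE !eqxx ?orbT.
have bQ : boundary S Q <= 0 by rewrite /boundary !big_cons big_nil x0 v0 v'0.
rewrite !big_cons big_nil addr0 addrA.
by apply: cpow_sum3; apply: (branch_exponent_le (b := 0)).
Qed.

Lemma Phi_in_bounded_cherry x v v' w :
  nbhd S v = [set x] -> nbhd S v' = [set x] -> nbhd S x = [set v; v'; w] ->
  v != v' -> v != w -> v' != w -> Phi_in_bounded S.
Proof.
move=> hv hv' hx vv' vw v'w; have [xS _] := nbhd_eq_mem hv (set11 x).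
have [vS xv] : v \in S /\ e x v by apply: nbhd_eq_mem hx _; rewrite !inE eqxx.
have [v'S xv'] : v' \in S /\ e x v' by apply: nbhd_eq_mem hx _; rewrite !inE eqxx ?orbT.
have [wS xw] : w \in S /\ e x w by apply: nbhd_eq_mem hx _; rewrite !inE eqxx ?orbT.
have [[xv0 xv'0] xw0] := (adj_neq xv, adj_neq xv', adj_neq xw).
set Q1 := [:: x; v; v']; set Q2 := [:: x; v; v'; w].
have [uQ1 uQ2] : uniq Q1 /\ uniq Q2 by split; distinct.
have [Q1S Q2S] : {subset Q1 <= S} /\ {subset Q2 <= S}.
  by split; apply/allP; rewrite /= xS vS v'S ?wS.
have [sh1 sh2] : shielded S Q1 [:: v; v'] /\ shielded S Q2 [:: v; v'].
  by split; (split; [distinct | apply/allP; rewrite /= !inE !eqxx ?orbT |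
     exact: dissociation_pair | apply/allP; rewrite /= hv hv' !sub1set !inE eqxx]).
apply: le_trans (Phi_in_le_sum_cpow (L := [:: (Q1, [:: false; true; true]);
  (Q2, [:: true; true; false; false]); (Q2, [:: true; false; true; false])]) S_IH _ _) _.
- move=> qb; rewrite !inE => /or3P[]/eqP->;
    [exact: valid_branch_shielded sh1 _ | exact: valid_branch_shielded sh2 _ ..].
- move=> F dF sF; have := count_max_shielded uQ1 Q1S sh1 dF sF.
  case/andP: dF => _ dF; have := dissociation_no_P3 dF xv xv' vv'.
  have := dissociation_no_P3 dF xv xw vw; have := dissociation_no_P3 dF xv' xw v'w.
  rewrite /matches /=.
  by case: (x \in F); case: (v \in F); case: (v' \in F); case: (w \in F).
have [x1 v1 v'1] : [/\ deg_in (S :\: [set:: Q1]) x <= 1, deg_in (S :\: [set:: Q1]) v = 0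
    & deg_in (S :\: [set:: Q1]) v' = 0].
  split; [apply: (@deg_in_setD1 _ _ _ w) | apply: deg_in_setD0 ..];
  by rewrite ?hx ?hv ?hv' ?subUset !sub1set !inE !eqxx ?orbT.
have [x2 v2 v'2] : [/\ deg_in (S :\: [set:: Q2]) x = 0, deg_in (S :\: [set:: Q2]) v = 0
    & deg_in (S :\: [set:: Q2]) v' = 0].
  by split; apply: deg_in_setD0; rewrite ?hx ?hv ?hv' ?subUset !sub1set !inE !eqxx ?orbT.
have w2 : deg_in (S :\: [set:: Q2]) w <= 2.
  by apply: (@deg_in_setD_le2 _ _ _ x); rewrite // ?inE ?eqxx // e_sym.
have bQ1 : boundary S Q1 <= 1 by rewrite /boundary !big_cons big_nil v1 v'1 !addn0.
have bQ2 : boundary S Q2 <= 2 by rewrite /boundary !big_cons big_nil x2 v2 v'2 !addn0.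
rewrite !big_cons big_nil addr0 addrA.
apply: cpow_sum3; first exact: (branch_exponent_le (b := 1)).
all: exact: (branch_exponent_le (b := 2)).
Qed.

Lemma Phi_in_bounded_long_pendant_path v x w p :
  nbhd S v = [set x] -> nbhd S x = [set v; w] -> nbhd S w = [set x; p] ->
  v != w -> x != p -> Phi_in_bounded S.
Proof.
move=> hv hx hw vw xp.
have [[vS xv] [wS xw]] := (nbhd_eq_mem hx (set21 v w), nbhd_eq_mem hx (set22 v w)).
have [[xS _] [pS wp]] := (nbhd_eq_mem hw (set21 x p), nbhd_eq_mem hw (set22 x p)).
have [[xv' xw'] wp'] := (adj_neq xv, adj_neq xw, adj_neq wp).
have pv : p != v by apply: (neq_nbhd (erefl _) hv (u := w)); rewrite !inE ?wS 1?e_sym // eq_sym.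
set Q1 := [:: w; x; v]; set Q2 := [:: x; v]; set Q3 := [:: w; x; v; p].
have [uQ1 uQ2 uQ3] : [/\ uniq Q1, uniq Q2 & uniq Q3] by split; distinct.
have [Q1S Q2S Q3S] : [/\ {subset Q1 <= S}, {subset Q2 <= S} & {subset Q3 <= S}].
  by split; apply/allP; rewrite /= ?wS ?xS ?vS ?pS.
have [xvdiss vdiss] := (dissociation_pair x v, dissociation_set1 v).
have [sh1 sh2 sh3] : [/\ shielded S Q1 [:: x; v], shielded S Q2 [:: v] &
    shielded S Q3 [:: x; v]].
  by split; split=> //; apply/allP; rewrite /= ?hx ?hv ?subUset ?sub1set !inE !eqxx ?orbT.
apply: le_trans (Phi_in_le_sum_cpow (L := [:: (Q1, [:: false; true; true]);
  (Q2, [:: false; true]); (Q3, [:: true; true; false; false])]) S_IH _ _) _.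
- move=> qb; rewrite !inE => /or3P[]/eqP->; [exact: valid_branch_shielded sh1 _ |
    exact: valid_branch_shielded sh2 _ | exact: valid_branch_shielded sh3 _].
- move=> F dF sF; have := count_max_shielded uQ1 Q1S sh1 dF sF.
  case/andP: dF => _ dF; have := dissociation_no_P3 dF xv xw vw.
  have := dissociation_no_P3 dF (etrans (e_sym w x) xw) wp xp.
  by rewrite /matches /=; case: (w \in F); case: (x \in F); case: (v \in F); case: (p \in F).
have [x1 v1 v2 x3] : [/\ deg_in (S :\: [set:: Q1]) x = 0, deg_in (S :\: [set:: Q1]) v = 0,
    deg_in (S :\: [set:: Q2]) v = 0 & deg_in (S :\: [set:: Q3]) x = 0].
  by split; apply: deg_in_setD0; rewrite ?hx ?hv ?subUset ?sub1set !inE !eqxx ?orbT.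
have [v3 w3] : deg_in (S :\: [set:: Q3]) v = 0 /\ deg_in (S :\: [set:: Q3]) w = 0.
  by split; apply: deg_in_setD0; rewrite ?hw ?hv ?subUset ?sub1set !inE !eqxx ?orbT.
have [w1 x2'] : deg_in (S :\: [set:: Q1]) w <= 1 /\ deg_in (S :\: [set:: Q2]) x <= 1.
  split; [apply: (@deg_in_setD1 _ _ _ p) | apply: (@deg_in_setD1 _ _ _ w)];
  by rewrite ?hw ?hx !subUset !sub1set !inE !eqxx ?orbT.
have p3 : deg_in (S :\: [set:: Q3]) p <= 2.
  by apply: (@deg_in_setD_le2 _ _ _ w); rewrite // ?inE ?eqxx // e_sym.
rewrite !big_cons big_nil addr0 addrA; apply: cpow_sum3.
- apply: (branch_exponent_le (b := 1)) => //.
  by rewrite /boundary !big_cons big_nil x1 v1 !addn0.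
- apply: (branch_exponent_le (b := 1)) => //.
  by rewrite /boundary !big_cons big_nil v2 !addn0.
- apply: (branch_exponent_le (b := 2)) => //.
  by rewrite /boundary !big_cons big_nil x3 v3 w3 !addn0.
Qed.

Lemma Phi_in_bounded_pendant_path_leaf v x w l p :
  nbhd S v = [set x] -> nbhd S x = [set v; w] -> nbhd S l = [set w] ->
  nbhd S w = [set x; l; p] -> x != l -> x != p -> l != p -> Phi_in_bounded S.
Proof.
move=> hv hx hl hw xl xp lp.
have [[vS xv] [wS xw]] := (nbhd_eq_mem hx (set21 v w), nbhd_eq_mem hx (set22 v w)).
have [xS _] := nbhd_eq_mem hv (set11 x).
have [lS wl] : l \in S /\ e w l by apply: nbhd_eq_mem hw _; rewrite !inE eqxx ?orbT.
have [pS wp] : p \in S /\ e w p by apply: nbhd_eq_mem hw _; rewrite !inE eqxx ?orbT.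
have [[[xv0 xw0] wl0] wp0] := (adj_neq xv, adj_neq xw, adj_neq wl, adj_neq wp).
have wv : w != v by apply: (neq_nbhd hw hv (u := l)); rewrite !inE ?eqxx ?orbT // eq_sym.
have vl : v != l by apply: (neq_nbhd hv hl (u := x)); rewrite !inE.
have pv : p != v by apply: (neq_nbhd (erefl _) hv (u := w)); rewrite !inE ?wS 1?e_sym // eq_sym.
set Q1 := [:: w; x; v; l]; set Q2 := [:: w; x; v; l; p].
have [uQ1 uQ2] : uniq Q1 /\ uniq Q2 by split; distinct.
have [Q1S Q2S] : {subset Q1 <= S} /\ {subset Q2 <= S}.
  by split; apply/allP; rewrite /= wS xS vS lS ?pS.
have dxvl : dissociation e [set:: [:: x; v; l]].
  apply: (@dissociation_cat [:: x; v] [:: l]); rewrite ?dissociation_pair ?dissociation_set1 //.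
  by move=> a b; rewrite !inE => /eqP-> /orP[]/eqP->; apply: nbhd_eq_nadj hl _ _; distinct.
have [sh1 sh2] : shielded S Q1 [:: x; v; l] /\ shielded S Q2 [:: x; v; l].
  by split; (split; [distinct | apply/allP; rewrite /= !inE !eqxx ?orbT | by [] |
    apply/allP; rewrite /= hx hv hl !subUset !sub1set !inE !eqxx ?orbT]).
apply: le_trans (Phi_in_le_sum_cpow (L := [:: (Q1, [:: false; true; true; true]);
  (Q2, [:: true; false; true; true; false])]) S_IH _ _) _.
- move=> qb; rewrite !inE => /orP[]/eqP->;
    [exact: valid_branch_shielded sh1 _ | exact: valid_branch_shielded sh2 _].
- move=> F dF sF; have := count_max_shielded uQ1 Q1S sh1 dF sF.
  case/andP: dF => _ dF; have := dissociation_no_P3 dF xw xv wv.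
  have := dissociation_no_P3 dF (etrans (e_sym w x) xw) wl xl.
  have := dissociation_no_P3 dF wl wp lp; rewrite /matches /=.
  by case: (w \in F); case: (x \in F); case: (v \in F); case: (l \in F); case: (p \in F).
have [w1 x1 v1 l1] : [/\ deg_in (S :\: [set:: Q1]) w <= 1, deg_in (S :\: [set:: Q1]) x = 0,
    deg_in (S :\: [set:: Q1]) v = 0 & deg_in (S :\: [set:: Q1]) l = 0].
  split; [apply: (@deg_in_setD1 _ _ _ p) | apply: deg_in_setD0 ..];
  by rewrite ?hw ?hx ?hv ?hl ?subUset !sub1set !inE !eqxx ?orbT.
have [w2 x2 v2 l2] : [/\ deg_in (S :\: [set:: Q2]) w = 0, deg_in (S :\: [set:: Q2]) x = 0,
    deg_in (S :\: [set:: Q2]) v = 0 & deg_in (S :\: [set:: Q2]) l = 0].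
  by split; apply: deg_in_setD0; rewrite ?hw ?hx ?hv ?hl ?subUset !sub1set !inE !eqxx ?orbT.
have p2 : deg_in (S :\: [set:: Q2]) p <= 2.
  by apply: (@deg_in_setD_le2 _ _ _ w); rewrite // ?inE ?eqxx ?orbT // e_sym.
have bQ1 : boundary S Q1 <= 1 by rewrite /boundary !big_cons big_nil x1 v1 l1 !addn0.
have bQ2 : boundary S Q2 <= 2 by rewrite /boundary !big_cons big_nil w2 x2 v2 l2 !addn0.
rewrite !big_cons big_nil addr0.
by apply: cpow_sum2; [apply: (branch_exponent_le (b := 1)) | apply: (branch_exponent_le (b := 2))].
Qed.

Lemma Phi_in_bounded_two_pendant_paths v1 x1 v2 x2 w p :
  nbhd S v1 = [set x1] -> nbhd S x1 = [set v1; w] ->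
  nbhd S v2 = [set x2] -> nbhd S x2 = [set v2; w] ->
  nbhd S w = [set x1; x2; p] -> x1 != x2 -> Phi_in_bounded S.
Proof.
move=> hv1 hx1 hv2 hx2 hw x12.
have [[v1S x1v1] [wS x1w]] := (nbhd_eq_mem hx1 (set21 v1 w), nbhd_eq_mem hx1 (set22 v1 w)).
have [[v2S x2v2] [_ x2w]] := (nbhd_eq_mem hx2 (set21 v2 w), nbhd_eq_mem hx2 (set22 v2 w)).
have [[x1S _] [x2S _]] := (nbhd_eq_mem hv1 (set11 x1), nbhd_eq_mem hv2 (set11 x2)).
have [[[x1v10 x1w0] x2v20] x2w0] := (adj_neq x1v1, adj_neq x1w, adj_neq x2v2, adj_neq x2w).
have wv1 : w != v1 by apply: (neq_nbhd hw hv1 (u := x2)); rewrite !inE ?eqxx ?orbT // eq_sym.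
have wv2 : w != v2 by apply: (neq_nbhd hw hv2 (u := x1)); rewrite !inE ?eqxx.
have x1v2 : x1 != v2 by apply: (neq_nbhd hx1 hv2 (u := w)); rewrite !inE ?eqxx ?orbT // eq_sym.
have x2v1 : x2 != v1 by apply: (neq_nbhd hx2 hv1 (u := w)); rewrite !inE ?eqxx ?orbT // eq_sym.
have v12 : v1 != v2 by apply: (neq_nbhd hv1 hv2 (u := x1)); rewrite !inE ?eqxx.
set Q := [:: w; x1; v1; x2; v2].
have uQ : uniq Q by distinct.
have QS : {subset Q <= S} by apply/allP; rewrite /= wS x1S v1S x2S v2S.
have dps : dissociation e [set:: [:: x1; v1; x2; v2]].
  apply: (@dissociation_cat [:: x1; v1] [:: x2; v2]); rewrite ?dissociation_pair //.
  move=> a b; rewrite !inE => /orP[]/eqP-> /orP[]/eqP->;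
  (apply: nbhd_eq_nadj hx2 _ _ || apply: nbhd_eq_nadj hv2 _ _); distinct.
have sh : shielded S Q [:: x1; v1; x2; v2].
  split=> //; first by distinct.
    by apply/allP; rewrite /= !inE !eqxx ?orbT.
  by apply/allP; rewrite /= hx1 hv1 hx2 hv2 !subUset !sub1set !inE !eqxx ?orbT.
apply: le_trans (Phi_in_le_sum_cpow (L := [:: (Q, [:: false; true; true; true; true])])
  S_IH _ _) _.
- by move=> qb; rewrite inE => /eqP->; apply: valid_branch_shielded sh _.
- move=> F dF sF; have := count_max_shielded uQ QS sh dF sF.
  case/andP: dF => _ dF; have := dissociation_no_P3 dF x1w x1v1 wv1.
  have := dissociation_no_P3 dF x2w x2v2 wv2.
  have := dissociation_no_P3 dF (etrans (e_sym w x1) x1w) (etrans (e_sym w x2) x2w) x12.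
  rewrite /matches /=.
  by case: (w \in F); case: (x1 \in F); case: (v1 \in F); case: (x2 \in F); case: (v2 \in F).
have w1 : deg_in (S :\: [set:: Q]) w <= 1.
  by apply: (@deg_in_setD1 _ _ _ p); rewrite hw !subUset !sub1set !inE !eqxx ?orbT.
have [x10 v10 x20 v20] : [/\ deg_in (S :\: [set:: Q]) x1 = 0, deg_in (S :\: [set:: Q]) v1 = 0,
    deg_in (S :\: [set:: Q]) x2 = 0 & deg_in (S :\: [set:: Q]) v2 = 0].
  by split; apply: deg_in_setD0; rewrite ?hx1 ?hv1 ?hx2 ?hv2 ?subUset !sub1set !inE !eqxx ?orbT.
have bQ : boundary S Q <= 1 by rewrite /boundary !big_cons big_nil x10 v10 x20 v20 !addn0.
rewrite big_cons big_nil addr0; apply: cpow_le; rewrite -[X in (_ <= X)%R]subr0.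
exact: (branch_exponent_le (b := 1)).
Qed.

Lemma Phi_in_bounded_two_leaves y v v' : v \in nbhd S y -> v' \in nbhd S y ->
  nbhd S v = [set y] -> nbhd S v' = [set y] -> v != v' -> Phi_in_bounded S.
Proof.
move=> vy v'y hv hv' vv'.
have [d2|d3] : deg_in S y = 2 \/ deg_in S y = 3.
  have : 1 < deg_in S y by apply/card_gt1P; exists v, v'.
  by have := deg_in_le3 S y; lia.
  exact: Phi_in_bounded_P3 hv hv' (card2_set2 d2 vy v'y vv') vv'.
have [w [hy vw v'w]] := card3_set3 d3 vy v'y vv'.
exact: Phi_in_bounded_cherry hv hv' hy vv' vw v'w.
Qed.

Lemma Phi_in_bounded_or_hub v y w :
  nbhd S v = [set y] -> nbhd S y = [set v; w] -> w \in S :\: leaves S ->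
  Phi_in_bounded S \/ deg_in S w = 3 /\ nbhd S w \subset S :\: leaves S.
Proof.
move=> hv hy wSL.
have [[vS yv] [wS yw]] := (nbhd_eq_mem hy (set21 v w), nbhd_eq_mem hy (set22 v w)).
have vw : v != w.
  by apply: contraTneq wSL => <-; rewrite !inE negb_and negbK vS /= /deg_in hv cards1.
have yN : y \in nbhd S w by rewrite inE (nbhd_eq_mem hv (set11 y)).1 e_sym.
have yNL : y \notin leaves S by rewrite inE negb_and -ltnNge /deg_in hy cards2 vw orbT.
have [d2|d3] : deg_in S w = 2 \/ deg_in S w = 3.
  by have := nonleaf_deg wSL; have := deg_in_le3 S w; lia.
  have [p pN py] : exists2 p, p \in nbhd S w & p != y.
    by apply: card_gt1_other; rewrite -/(deg_in S w) d2.
  left; apply: (@Phi_in_bounded_long_pendant_path v y w p hv hy _ vw); last by rewrite eq_sym.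
  by apply: (card2_set2 d2 yN pN); rewrite eq_sym.
have [/existsP[l /andP[lN lL]]|noL] := boolP [exists l in nbhd S w, l \in leaves S].
  have yl : y != l by apply: contraNneq yNL => ->.
  have [p [hw yp lp]] := card3_set3 d3 yN lN yl.
  have [_ wl] := nbhd_eq_mem (erefl _) lN.
  have hl : nbhd S l = [set w] by apply: leaf_nbhd lL wS _; rewrite e_sym.
  by left; apply: Phi_in_bounded_pendant_path_leaf hv hy hl hw yl yp lp.
right; split=> //; apply/subsetP => u uN; rewrite inE (subsetP (nbhd_sub S w)) // andbT.
by apply: contraNN noL => uL; apply/existsP; exists u; rewrite uN.
Qed.

Lemma Phi_in_bounded_or_pendant y :
  y \in S :\: leaves S -> deg_in (S :\: leaves S) y <= 1 ->
  Phi_in_bounded S \/ exists v w,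
    [/\ nbhd S y = [set v; w], nbhd S v = [set y], w \in S :\: leaves S,
        deg_in S w = 3 & nbhd S w \subset S :\: leaves S].
Proof.
move=> ySL dy; have d2 := nonleaf_deg ySL; have yS := subsetP (subsetDl S _) y ySL.
have hsplit := deg_in_setD S (leaves S) y.
have leafN u : u \in nbhd (S :&: leaves S) y -> u \in nbhd S y /\ nbhd S u = [set y].
  rewrite inE in_setI => /andP[/andP[uS uL] yu]; split; first by rewrite inE uS.
  by apply: leaf_nbhd uL yS _; rewrite e_sym.
have [two|one] := leqP 2 (deg_in (S :&: leaves S) y).
  have /card_gt0P[v vN] : 0 < deg_in (S :&: leaves S) y by apply: leq_trans two.
  have [v' v'N v'v] := card_gt1_other v two.
  have [[vy hv] [v'y hv']] := (leafN v vN, leafN v' v'N).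
  by left; apply: (Phi_in_bounded_two_leaves vy v'y hv hv'); rewrite eq_sym.
have /card_gt0P[v vN] : 0 < deg_in (S :&: leaves S) y by move: hsplit; lia.
have /card_gt0P[w] : 0 < deg_in (S :\: leaves S) y by move: hsplit; lia.
rewrite inE => /andP[wSL yw]; have [vy hv] := leafN v vN.
have vL : v \in leaves S by move: vN; rewrite inE in_setI => /andP[/andP[]].
have vw : v != w by apply: contraTneq wSL => <-; rewrite inE vL.
have dy2 : deg_in S y = 2 by lia.
have hy : nbhd S y = [set v; w].
  by apply: card2_set2 dy2 vy _ vw; rewrite inE yw (subsetP (subsetDl S _) w wSL).
have [|[dw wsub]] := Phi_in_bounded_or_hub hv hy wSL; first by left.
by right; exists v, w.
Qed.

Lemma pendant_hub y v w z : nbhd S y = [set v; w] -> nbhd S v = [set y] ->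
  z \in S :\: leaves S -> e y z -> z = w.
Proof.
move=> hy hv zSL yz; have [vS _] := nbhd_eq_mem hy (set21 v w).
have : z \in [set v; w] by rewrite -hy inE (subsetP (subsetDl S _) z zSL).
rewrite !inE => /orP[/eqP zv|/eqP //]; move: zSL; rewrite zv !inE /deg_in hv cards1.
by rewrite vS.
Qed.

(* z is a leaf of the forest left after deleting the leaves twice; each of its
   neighbours among the second-layer leaves is the middle of a pendant path of length 2. *)
Lemma Phi_in_bounded_second_layer :
  (S :\: leaves S) :\: leaves (S :\: leaves S) != set0 -> Phi_in_bounded S.
Proof.
set S1 := S :\: leaves S => S2n; have [z zS2 dz] := e_forest S2n.
have zS1 := subsetP (subsetDl S1 _) z zS2.
have hsplit := deg_in_setD S1 (leaves S1) z; have := nonleaf_deg zS2.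
have spoke y : y \in nbhd (S1 :&: leaves S1) z -> Phi_in_bounded S \/
    [/\ exists2 v, nbhd S y = [set v; z] & nbhd S v = [set y],
        y \in nbhd S z, deg_in S z = 3 & nbhd S z \subset S1].
  rewrite inE in_setI => /andP[/andP[yS1 yL] zy]; move: (yL); rewrite inE => /andP[_ dy].
  have [|[v [w [hy hv _ dw wsub]]]] := Phi_in_bounded_or_pendant yS1 dy; first by left.
  have zw := pendant_hub hy hv zS1 (etrans (e_sym y z) zy); rewrite -zw in hy dw wsub.
  by right; split=> //; [exists v | rewrite inE (subsetP (subsetDl S _) y yS1)].
move=> dz2; have /card_gt0P[y1 y1N] : 0 < deg_in (S1 :&: leaves S1) z by lia.
have [|[[v1 hy1 hv1] y1z dz3 zsub]] := spoke y1 y1N; first by [].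
have dz13 : deg_in S1 z = 3 by rewrite /deg_in (nbhd_restrict (subsetDl S _) zsub).
have [y2 y2N y21] : exists2 y2, y2 \in nbhd (S1 :&: leaves S1) z & y2 != y1.
  by apply: card_gt1_other; rewrite -/(deg_in _ z); lia.
have [|[[v2 hy2 hv2] y2z _ _]] := spoke y2 y2N; first by [].
have y12 : y1 != y2 by rewrite eq_sym.
have [p [hz _ _]] := card3_set3 dz3 y1z y2z y12.
exact: Phi_in_bounded_two_pendant_paths hv1 hy1 hv2 hy2 hz y12.
Qed.

Lemma Phi_in_bounded_nonempty : S != set0 -> Phi_in_bounded S.
Proof.
move=> Sn.
have [/existsP[v /andP[vS /eqP d0]]|/existsPn pos] := boolP [exists v in S, deg_in S v == 0].
  by apply: (Phi_in_bounded_isolated_vertex vS); apply/eqP; rewrite -cards_eq0 -/(deg_in S v) d0.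
have {}pos : {in S, forall v, 0 < deg_in S v}.
  by move=> v vS; have := pos v; rewrite vS lt0n.
have [/existsP[u /andP[uL /existsP[v /andP[vL uv]]]]|/existsPn noLL] :=
  boolP [exists u in leaves S, exists v in leaves S, e u v].
  have [uS vS] : u \in S /\ v \in S by move: uL vL; rewrite !inE => /andP[-> _] /andP[-> _].
  by apply: (@Phi_in_bounded_isolated_edge u v); apply: leaf_nbhd; rewrite // e_sym.
have S1n : S :\: leaves S != set0.
  apply: leaves_proper => // u v uL vL.
  by have := noLL u; rewrite uL => /existsPn/(_ v); rewrite vL.
have [y yS1 dy] := e_forest S1n.
have [//|[v [w [_ _ wS1 dw3 wsub]]]] := Phi_in_bounded_or_pendant yS1 dy.
apply: Phi_in_bounded_second_layer; apply/set0Pn; exists w.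
rewrite in_setD wS1 andbT in_set wS1 /= -ltnNge.
by rewrite /deg_in (nbhd_restrict (subsetDl S _) wsub) -/(deg_in S w) dw3.
Qed.

End Reductions.

Lemma potential_set0 : potential set0 = 0%R.
Proof. by rewrite /potential cards0 psi_in_set0 /degsum big_set0. Qed.

Lemma Phi_in_bounded_all S : Phi_in_bounded S.
Proof.
have [n] := ubnP #|S|; elim: n S => // n IHn S ltSn.
have [->|Sn] := eqVneq S set0.
  by rewrite /Phi_in_bounded potential_set0 /cpow expr0z lern1 Phi_in_set0.
by apply: Phi_in_bounded_nonempty Sn => S' ltS'; apply: IHn; lia.
Qed.

End SubcubicForests.

Section Trees.
Variables (T : finType) (e : rel T).
Implicit Types A : {set T}.

Lemma card_arcs_degsum : #|[set p : T * T | e p.1 p.2]| = degsum e setT.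
Proof.
rewrite -sum1_card (eq_bigl (fun p : T * T => e p.1 p.2)) => [|p]; last by rewrite inE.
rewrite -(pair_big_dep xpredT (fun v u => e v u) (fun _ _ => 1)) /degsum.
by apply: eq_big => [v|v _]; rewrite ?inE // sum1_card; apply: eq_card => u; rewrite !inE.
Qed.

Lemma degsum_nedges : 2 * nedges e <= degsum e setT <= 2 * nedges e + 1.
Proof.
rewrite /nedges card_arcs_degsum {2 4}(divn_eq (degsum e setT) 2).
by have := ltn_pmod (degsum e setT) (isT : 0 < 2); lia.
Qed.

Lemma path_crosses A x p : x \in A -> path e x p -> last x p \notin A ->
  exists u v, [/\ u \in A, v \notin A & e u v].
Proof.
elim: p x => [|y p IHp] x xA /=; first by rewrite xA.
case/andP=> xy py; case yA: (y \in A); first exact: IHp.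
by move=> _; exists x, y; rewrite yA.
Qed.

Hypotheses (e_sym : symmetric e) (e_irr : irreflexive e) (e_conn : forall x y, connect e x y).

Lemma degsum_add_compl A : A != set0 -> degsum e A + 2 * #|~: A| <= degsum e setT.
Proof.
have [k] := ubnP #|~: A|; elim: k A => // k IHk A cA /set0Pn[a aA].
have [A0|/set0Pn[b bA]] := eqVneq (~: A) set0.
  by rewrite A0 cards0 muln0 addn0 -(setCK A) A0 setC0.
have [p ap bE] := connectP (e_conn a b).
have [y [z [yA zA yz]]] : exists u v, [/\ u \in A, v \notin A & e u v].
  by apply: (path_crosses aA ap); rewrite -bE; move: bA; rewrite inE.
have zA' : [set z] \subset z |: A by rewrite sub1set setU11.
have := degsum_setD e_sym zA'; rewrite degsum_set1 // big_set1.
have -> : (z |: A) :\: [set z] = A by rewrite setU1K.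
have dz : 0 < deg_in e A z by apply/card_gt0P; exists y; rewrite inE yA e_sym.
have cC : #|~: A| = #|~: (z |: A)|.+1 by rewrite (cardsD1 z) inE zA setCU setIC -setDE.
have A'n : z |: A != set0 by apply/set0Pn; exists z; rewrite setU11.
have ltk : #|~: (z |: A)| < k by rewrite -ltnS -cC.
by have := IHk _ ltk A'n; lia.
Qed.

Lemma tree_forest : nedges e = #|T| - 1 ->
  forall A, A != set0 -> exists2 v, v \in A & deg_in e A v <= 1.
Proof.
move=> ned A An; have /andP[_ ub] := degsum_nedges; rewrite ned in ub.
have lb := degsum_add_compl An; have cC := cardsC A.
have [/existsP[v /andP[vA dv]]|/existsPn all2] := boolP [exists v in A, deg_in e A v <= 1].
  by exists v.
have : \sum_(v in A) 2 <= degsum e A.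
  by apply: leq_sum => v vA; have := all2 v; rewrite vA /= -ltnNge.
have A0 : 0 < #|A| by rewrite card_gt0.
by rewrite sum_nat_const; lia.
Qed.

End Trees.

Local Open Scope ring_scope.

Theorem theorem3p2 (T : finType) (e : rel T) :
  is_tree e -> subcubic e ->
  (Phi e)%:R <= ((1466%:Q / 1000%:Q) ^ (4 * (#|T|)%:Z - 5 * (psi e)%:Z + 2))%R.
Proof.
case=> [[e_sym e_irr] [_ [e_conn ned]]] e_sub.
have e_forest := tree_forest e_sym e_irr e_conn ned.
have := Phi_in_bounded_all e_sym e_irr e_sub e_forest setT.
rewrite /Phi_in_bounded Phi_in_setT => /le_trans; apply.
have /andP[lb _] := degsum_nedges e; rewrite ned in lb.
have : (potential e setT <= 4 * (#|T|)%:Z - 5 * (psi e)%:Z + 2)%R.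
  by rewrite /potential cardsT psi_in_setT; lia.
by move/cpow_le; rewrite /cpow /c -lock.
Qed.
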